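(* Let $\kappa$ be a regular infinite cardinal, $I$ a nonempty set of players, and $(S,\Sigma_S)$ a $\kappa$-measurable space separating points of $S$. With $\Omega$, $\Sigma_\Omega$, $T_i^*$, $\theta^*$ as in the context, $\langle\Omega,\Sigma_\Omega,(T_i^* )_{i\in I},\theta^*\rangle$ is a $\kappa$-type space on $S$ for player set $I$.
   Context: A $\kappa$-field on a nonempty set $M$ is a field of subsets closed under intersections of fewer than $\kappa$ members; $(M,\Sigma)$ is then $\kappa$-measurable. $\Delta^\kappa(M,\Sigma)$ is the set of finitely additive probability measures on $(M,\Sigma)$, with the $\kappa$-field generated by the sets $\{\mu:\mu(E)\ge p\}$, $E\in\Sigma$, $p\in[0,1]$. ''Separating points'' means: for all $s\neq s'$ in $S$ there is $E\in\Sigma_S$ with $s\in E$, $s'\notin E$. A $\kappa$-type space on $S$ for $I$ is $\langle M,\Sigma,(T_i)_{i\in I},\theta\rangle$ with $M$ nonempty, $\Sigma$ a $\kappa$-field on $M$, each $T_i:M\to\Delta^\kappa(M,\Sigma)$ measurable such that for all $m\in M$, $A\in\Sigma$: $\{m':T_i(m')=T_i(m)\}\subseteq A$ implies $T_i(m)(A)=1$; and $\theta:M\to S$ measurable. $\kappa$-expressions $\Phi^\kappa$: least set containing every $E\in\Sigma_S$ and closed under $\neg\varphi$, $B_i^p(\varphi)$ ($i\in I$, $p\in[0,1]$), and $\bigwedge_{\varphi\in\Psi}\varphi$ for nonempty $\Psi$ with $|\Psi|<\kappa$. In a $\kappa$-type space: $E^{\underline M}=\theta^{-1}(E)$, $(\neg\varphi)^{\underline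 M}=M\setminus\varphi^{\underline M}$, $(B_i^p\varphi)^{\underline M}=\{m:T_i(m)(\varphi^{\underline M})\ge p\}$, $(\bigwedge\Psi)^{\underline M}=\bigcap_{\varphi\in\Psi}\varphi^{\underline M}$. $D(m)=\{\varphi:m\in\varphi^{\underline M}\}$. $\Omega$ = set of all $D(m)$ over all $\kappa$-type spaces on $S$ for $I$ and all their states; $[\varphi]=\{\omega\in\Omega:\varphi\in\omega\}$, $\Sigma_\Omega=\{[\varphi]:\varphi\in\Phi^\kappa\}$. $T_i^*(\omega)([\varphi])=\sup\{p\in[0,1]:B_i^p(\varphi)\in\omega\}$ (equal to $T_i(m)(\varphi^{\underline M})$ for any $m$ in any $\kappa$-type space with $D(m)=\omega$), and $\theta^*(\omega)$ is the unique $s\in S$ belonging to every $E\in\Sigma_S\cap\omega$ (equal to $\theta(m)$ for any such $m$). *)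

From HB Require Import structures.
From mathcomp Require Import all_boot all_order all_algebra.
From mathcomp Require Import all_classical all_reals.
From mathcomp Require Import Rstruct.
Import Order.TTheory GRing.Theory Num.Theory.
Local Open Scope classical_set_scope.
Local Open Scope ring_scope.

Notation R := Rdefinitions.R.

(* Cardinals are represented by a type K (standing for the cardinal |K|).   *)
Definition card_lt_K (K : Type) (T : Type) (A : set T) : Prop :=
  card_le A [set: K] /\ ~ card_le [set: K] A.

Definition regular_infinite (K : Type) : Prop :=
  infinite_set [set: K] /\
  forall (J : set K) (F : K -> set K),
    card_lt_K K K J -> (forall j, J j -> card_lt_K K K (F j)) ->
    card_lt_K K K (\bigcup_(j in J) F j).

Definition kfield (K : Type) (M : Type) (Sig : set (set M)) : Prop :=
  [/\ Sig setT,
      (forall A, Sig A -> Sig (~` A)),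
      (forall A B, Sig A -> Sig B -> Sig (A `|` B)) &
      (forall F : set (set M), card_lt_K K (set M) F -> F `<=` Sig ->
         Sig (\bigcap_(A in F) A))].

Definition gen_kfield (K : Type) (M : Type) (G : set (set M)) : set (set M) :=
  fun A => forall Sig', kfield K M Sig' -> G `<=` Sig' -> Sig' A.

Definition fa_prob (M : Type) (Sig : set (set M)) (mu : set M -> R) : Prop :=
  [/\ forall E, Sig E -> 0 <= mu E,
      mu setT = 1 &
      forall A B, Sig A -> Sig B -> A `&` B = set0 -> mu (A `|` B) = mu A + mu B].

(* Delta^kappa(M, Sig): measures are functions set M -> R; only their      *)
(* values on Sig matter (see the introspection clause below).               *)
Definition Delta (M : Type) (Sig : set (set M)) := {mu : set M -> R | fa_prob M Sig mu}.

Definition Delta_gen (M : Type) (Sig : set (set M)) : set (set (Delta M Sig)) :=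
  [set B | exists E p, Sig E /\ 0 <= p <= 1 /\ B = [set mu : Delta M Sig | p <= sval mu E]].

Definition Delta_kfield (K : Type) (M : Type) (Sig : set (set M)) : set (set (Delta M Sig)) :=
  gen_kfield K (Delta M Sig) (Delta_gen M Sig).

Definition is_type_space (K S I : Type) (SigS : set (set S))
    (M : Type) (Sig : set (set M)) (T : I -> M -> Delta M Sig) (theta : M -> S) : Prop :=
  [/\ (exists m : M, True),
      kfield K M Sig,
      (forall i B, Delta_kfield K M Sig B -> Sig (T i @^-1` B)),
      (forall i m A, Sig A ->
          [set m' | forall E, Sig E -> sval (T i m') E = sval (T i m) E] `<=` A ->
          sval (T i m) A = 1) &
      (forall E, SigS E -> Sig (theta @^-1` E))].

(* Raw syntax of expressions.  A conjunction is given by a set P of indices *)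
(* in K together with a family g; it denotes /\_{k in P} g k.               *)
Inductive kexpr (K S I : Type) : Type :=
| Atom : set S -> kexpr K S I
| Neg : kexpr K S I -> kexpr K S I
| Bel : I -> R -> kexpr K S I -> kexpr K S I
| Conj : set K -> (K -> kexpr K S I) -> kexpr K S I.
Arguments Atom {K S I}.
Arguments Neg {K S I}.
Arguments Bel {K S I}.
Arguments Conj {K S I}.

Fixpoint wff (K S I : Type) (SigS : set (set S)) (f : kexpr K S I) : Prop :=
  match f with
  | Atom E => SigS E
  | Neg g => wff K S I SigS g
  | Bel _ p g => 0 <= p <= 1 /\ wff K S I SigS g
  | Conj P g => P !=set0 /\ card_lt_K K K P /\ forall k, P k -> wff K S I SigS (g k)
  end.

Fixpoint sem (K S I : Type) (M : Type) (Sig : set (set M))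
    (T : I -> M -> Delta M Sig) (theta : M -> S) (f : kexpr K S I) : set M :=
  match f with
  | Atom E => theta @^-1` E
  | Neg g => ~` sem K S I M Sig T theta g
  | Bel i p g => [set m | p <= sval (T i m) (sem K S I M Sig T theta g)]
  | Conj P g => \bigcap_(k in P) sem K S I M Sig T theta (g k)
  end.

Definition Dm (K S I : Type) (SigS : set (set S)) (M : Type) (Sig : set (set M))
    (T : I -> M -> Delta M Sig) (theta : M -> S) (m : M) : set (kexpr K S I) :=
  [set f | wff K S I SigS f /\ sem K S I M Sig T theta f m].

Definition Omega (K S I : Type) (SigS : set (set S)) : set (set (kexpr K S I)) :=
  [set w | exists (M : Type) (Sig : set (set M)) (T : I -> M -> Delta M Sig)
             (theta : M -> S) (m : M),
             is_type_space K S I SigS M Sig T theta /\ w = Dm K S I SigS M Sig T theta m].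

Definition OmegaT (K S I : Type) (SigS : set (set S)) :=
  {w : set (kexpr K S I) | Omega K S I SigS w}.

Definition bracket (K S I : Type) (SigS : set (set S)) (f : kexpr K S I)
  : set (OmegaT K S I SigS) := [set w | sval w f].

Definition SigmaOmega (K S I : Type) (SigS : set (set S)) : set (set (OmegaT K S I SigS)) :=
  [set A | exists f : kexpr K S I, wff K S I SigS f /\ A = bracket K S I SigS f].

Definition separates_points (S : Type) (SigS : set (set S)) : Prop :=
  forall s s' : S, s <> s' -> exists E, SigS E /\ E s /\ ~ E s'.

From HB Require Import structures.
From mathcomp Require Import all_boot all_order all_algebra.
From mathcomp Require Import all_classical all_reals.
From mathcomp Require Import Rstruct.
Import Order.TTheory GRing.Theory Num.Theory.
Local Open Scope classical_set_scope.
Local Open Scope ring_scope.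

(* Every w in Omega is D(m) for a state m of some type space M, and the map
   m |-> D(m) pulls [phi] back to the extension of phi in M.  So a set of
   Sigma_Omega determines the extension of its expressions in every type
   space, T_i^*(D(m))(A) := T_i(m)(D^-1(A)) is well defined, and the type
   space axioms (field, additivity, measurability, introspection) transfer
   from M to Omega along D^-1.  Conjunctions are indexed by subsets of kappa,
   so an intersection of fewer than kappa sets [phi_j] is again a [phi]; hence
   only the infinitude of kappa is used, and the nonemptiness of I not at all. *)

Lemma card_lt_K_image (K T U : Type) (A : set T) (f : T -> U) :
  card_lt_K K T A -> card_lt_K K U (f @` A).
Proof.
case=> AK notKA; split; first exact: card_le_trans (card_image_le f A) AK.
by move=> KfA; apply: notKA; exact: card_le_trans KfA (card_image_le f A).
Qed.

Lemma card_lt_K_finite (K T : Type) (A : set T) :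
  infinite_set [set: K] -> finite_set A -> card_lt_K K T A.
Proof.
move=> infK finA; split; last by move=> /card_le_finite/(_ finA).
have [n An] := (finite_set_leP A).1 finA.
apply: card_le_trans An _; apply: card_le_trans (subset_card_le (@subsetT nat `I_n)) _.
exact/infiniteP.
Qed.

Lemma card_le_injective {T U : Type} {A : set T} (u0 : U) :
  card_le A [set: U] -> exists f : T -> U, {in A &, injective f}.
Proof.
move=> /card_leP[h].
exists (fun a => if pselect (A a) is left Aa then val (h (SigSub (mem_set Aa))) else u0).
move=> a b /set_mem Aa /set_mem Ab /=.
case: pselect => // Aa'; case: pselect => // Ab' hab.
suff : SigSub (mem_set Aa') = SigSub (mem_set Ab') :> A by move/(congr1 val).
by apply: 'inj_h; rewrite ?in_setT //; exact: val_inj.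
Qed.

Lemma fa_prob_ge0_le1 {M : Type} {Sig : set (set M)} {mu : set M -> R} {E : set M} :
  (forall A, Sig A -> Sig (~` A)) -> fa_prob M Sig mu -> Sig E -> 0 <= mu E <= 1.
Proof.
move=> SigC [mu_ge0 muT mu_add] SE; rewrite mu_ge0 //=.
have := mu_add E (~` E) SE (SigC _ SE) (setICr E).
by rewrite setUCr muT => ->; rewrite lerDl mu_ge0 //; exact: SigC.
Qed.

Lemma sup_itv01_le {v : R} : 0 <= v <= 1 -> sup [set p : R | 0 <= p <= 1 /\ p <= v] = v.
Proof.
case/andP=> v_ge0 v_le1.
rewrite -[RHS](sup_itvcc v_ge0); congr sup; apply/seteqP; split=> p /=.
- by case=> /andP[p_ge0 _] p_lev; rewrite in_itv /= p_ge0 p_lev.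
- by rewrite in_itv /= => /andP[-> p_lev]; rewrite p_lev (le_trans p_lev v_le1).
Qed.

Lemma sub_gen_kfield (K T : Type) (G : set (set T)) : G `<=` gen_kfield K T G.
Proof. by move=> A GA Sig' _; apply. Qed.

Lemma kfield_preimage (K T U : Type) (Sig : set (set T)) (f : T -> U) :
  kfield K T Sig -> kfield K U [set B | Sig (f @^-1` B)].
Proof.
case=> SigT SigC SigU SigI; split=> //=.
- by move=> B /SigC; rewrite preimage_setC.
- by move=> A B SA SB; rewrite preimage_setU; exact: SigU.
- move=> F cF FSig; rewrite preimage_bigcap -(bigcap_image F (preimage f) id).
  by apply: SigI; [exact: card_lt_K_image | move=> _ [B FB <-]; exact: FSig].
Qed.

Lemma gen_kfield_preimage (K T U : Type) (Sig : set (set T)) (G : set (set U))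
    (f : T -> U) :
  kfield K T Sig -> (forall B, G B -> Sig (f @^-1` B)) ->
  forall B, gen_kfield K U G B -> Sig (f @^-1` B).
Proof.
by move=> kSig fG B /(_ [set B | Sig (f @^-1` B)]); apply; [exact: kfield_preimage|].
Qed.

Section TypeSpaceSemantics.
Context {K S I M : Type} {SigS : set (set S)} {Sig : set (set M)}
  {T : I -> M -> Delta M Sig} {th : M -> S}.
Hypothesis ts : is_type_space K S I SigS M Sig T th.

Local Notation semM := (sem K S I M Sig T th).
Local Notation wf := (wff K S I SigS).

Lemma sem_measurable {f} : wf f -> Sig (semM f).
Proof.
have [_ [_ SigC _ SigI] T_meas _ th_meas] := ts.
elim: f => [E|f IHf|i p f IHf|P g IHg] /=.
- exact: th_meas.
- by move/IHf; exact: SigC.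
- case=> p01 /IHf Sf.
  apply: (T_meas i [set mu | p <= sval mu (semM f)]); apply: sub_gen_kfield.
  by exists (semM f), p.
- case=> _ [cP wg]; rewrite -(bigcap_image P (fun k => semM (g k)) id).
  apply: SigI; first exact: card_lt_K_image.
  by move=> _ [k Pk <-]; exact: IHg (wg k Pk).
Qed.

Lemma Dm_in_Omega m : Omega K S I SigS (Dm K S I SigS M Sig T th m).
Proof. by exists M, Sig, T, th, m. Qed.

Definition to_Omega (m : M) : OmegaT K S I SigS := exist _ _ (Dm_in_Omega m).

Lemma to_OmegaE m : sval (to_Omega m) = Dm K S I SigS M Sig T th m.
Proof. by []. Qed.

Lemma sem_preimage_bracket {f} :
  wf f -> semM f = to_Omega @^-1` bracket K S I SigS f.
Proof. by move=> wf_f; apply/seteqP; split=> m; rewrite /bracket /Dm /=; [|case]. Qed.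

Lemma preimage_to_Omega_measurable {A} :
  SigmaOmega K S I SigS A -> Sig (to_Omega @^-1` A).
Proof. by case=> f [wf_f ->]; rewrite -sem_preimage_bracket //; exact: sem_measurable. Qed.

Lemma type_ge0_le1 i m {E} : Sig E -> 0 <= sval (T i m) E <= 1.
Proof. by have [_ [_ SigC _ _] _ _ _] := ts; exact: fa_prob_ge0_le1 SigC (svalP (T i m)). Qed.

Lemma Dm_BelE i p f m : wf f ->
  Dm K S I SigS M Sig T th m (Bel i p f) <-> 0 <= p <= 1 /\ p <= sval (T i m) (semM f).
Proof. by move=> wf_f; rewrite /Dm /=; split=> [[[]]|[]]. Qed.

End TypeSpaceSemantics.

Section CanonicalTypeSpace.
Context {K S I : Type} {SigS : set (set S)}.
Hypotheses (kS : kfield K S SigS) (infK : infinite_set [set: K])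
  (sep : separates_points S SigS).

Local Notation W := (OmegaT K S I SigS).
Local Notation SigO := (SigmaOmega K S I SigS).
Local Notation br := (bracket K S I SigS).
Local Notation wf := (wff K S I SigS).

Lemma bracket_Neg f : wf f -> br (Neg f) = ~` br f.
Proof.
move=> wf_f; apply/seteqP; split=> w; have [M [Sig [T [th [m [_ hw]]]]]] := svalP w;
  rewrite /bracket /= hw /Dm /=.
- by case=> _ nf [].
- by move=> nf; split=> // fm; apply: nf.
Qed.

Lemma bracket_Conj P g :
  wf (Conj P g) -> br (Conj P g) = \bigcap_(k in P) br (g k).
Proof.
move=> wfC; have [_ [_ wg]] := wfC.
apply/seteqP; split=> w; have [M [Sig [T [th [m [_ hw]]]]]] := svalP w;
  rewrite /bracket /= hw /Dm /=.
- by case=> _ gm k Pk /=; rewrite hw; split; [exact: wg | exact: gm].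
- by move=> gm; split=> // k Pk; have /= := gm k Pk; rewrite hw => -[].
Qed.

Lemma theta_star_ex (w : W) : exists s, forall E, SigS E -> sval w (Atom E) -> E s.
Proof. by have [M [Sig [T [th [m [_ ->]]]]]] := svalP w; exists (th m) => E _ []. Qed.

Definition theta_star (w : W) : S := sval (cid (theta_star_ex w)).

Lemma theta_star_Dm {w : W} {M : Type} {Sig : set (set M)} {T : I -> M -> Delta M Sig}
    {th : M -> S} {m : M} :
  sval w = Dm K S I SigS M Sig T th m -> theta_star w = th m.
Proof.
move=> hw; rewrite /theta_star; case: cid => s /= sP.
apply: contrapT => /nesym /(sep _ _)[E [SE [Em nEs]]].
by apply: nEs; apply: sP => //; rewrite hw.
Qed.

Lemma theta_star_Atom {w E} : SigS E -> sval w (Atom E) <-> E (theta_star w).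
Proof.
move=> SE; have [M [Sig [T [th [m [_ hw]]]]]] := svalP w.
by rewrite (theta_star_Dm hw) hw /Dm /=; split=> [[]|].
Qed.

Lemma bracket_Atom E : SigS E -> br (Atom E) = theta_star @^-1` E.
Proof. by move=> SE; apply/seteqP; split=> w /(theta_star_Atom SE). Qed.

Lemma SigmaOmega_setT : SigO setT.
Proof.
have [SigST _ _ _] := kS; exists (Atom setT); split=> //.
apply/seteqP; split=> w // _; have [M [Sig [T [th [m [_ hw]]]]]] := svalP w.
by rewrite /bracket /= hw.
Qed.

Lemma SigmaOmega_setC A : SigO A -> SigO (~` A).
Proof. by case=> f [wf_f ->]; exists (Neg f); rewrite bracket_Neg. Qed.

Lemma SigmaOmega_bigcap F :
  card_lt_K K (set W) F -> F `<=` SigO -> SigO (\bigcap_(A in F) A).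
Proof.
move=> cF FSig; have [->|/set0P[A0 FA0]] := eqVneq F set0.
  by rewrite bigcap_set0; exact: SigmaOmega_setT.
have [k0 _] := infinite_setN0 infK.
have [iota iotaI] := card_le_injective k0 cF.1.
pose pre := pinv_ (fun=> A0) F iota.
have preK : {in F, cancel iota pre} := pinvKV _ iotaI.
have /choice[g gP] : forall k, exists f, (iota @` F) k -> wf f /\ pre k = br f.
  move=> k; have [[A FA <-]|notFk] := pselect ((iota @` F) k); last first.
    by exists (Atom setT) => /notFk.
  have [f [wf_f eA]] := FSig A FA.
  by exists f => _; rewrite preK ?inE.
have wfC : wf (Conj (iota @` F) g).
  split; first by exists (iota A0), A0.
  by split; [exact: card_lt_K_image | move=> k /gP[]].
exists (Conj (iota @` F) g); split=> //.
rewrite bracket_Conj // bigcap_image; apply: eq_bigcapr => A FA.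
by have [_ <-] := gP (iota A) (imageP _ FA); rewrite preK ?inE.
Qed.

Lemma kfield_SigmaOmega : kfield K W SigO.
Proof.
split; [exact: SigmaOmega_setT | exact: SigmaOmega_setC | | exact: SigmaOmega_bigcap].
move=> A B SA SB.
have -> : A `|` B = ~` \bigcap_(X in [set ~` A; ~` B]) X.
  by rewrite bigcap_setU !bigcap_set1 -setCU setCK.
apply/SigmaOmega_setC/SigmaOmega_bigcap; first exact: card_lt_K_finite.
by move=> X [|] ->; exact: SigmaOmega_setC.
Qed.

(* The supremum ranges over all representatives f of A, so no choice of one is needed. *)
Definition T_star_fun (i : I) (w : W) (A : set W) : R :=
  sup [set p : R | exists f, A = br f /\ sval w (Bel i p f)].

Lemma T_star_fun_Dm (i : I) {w : W} {M : Type} {Sig : set (set M)}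
    {T : I -> M -> Delta M Sig} {th : M -> S} (ts : is_type_space K S I SigS M Sig T th)
    {m : M} {A : set W} :
  sval w = Dm K S I SigS M Sig T th m -> SigO A ->
  T_star_fun i w A = sval (T i m) (to_Omega ts @^-1` A).
Proof.
move=> hw SA.
have v01 := type_ge0_le1 ts i m (preimage_to_Omega_measurable ts SA).
rewrite /T_star_fun -[RHS](sup_itv01_le v01); congr sup; apply/seteqP; split=> p /=.
- case=> f [->]; rewrite hw => -[[p01 wf_f] le_p].
  by rewrite -sem_preimage_bracket.
- case=> p01 le_p; have [f [wf_f eA]] := SA; exists f; split=> //.
  by rewrite hw Dm_BelE // (sem_preimage_bracket ts wf_f) -eA.
Qed.

Lemma fa_prob_T_star_fun i w : fa_prob W SigO (T_star_fun i w).
Proof.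
have [M [Sig [T [th [m [ts hw]]]]]] := svalP w.
have [mu_ge0 muT mu_add] := svalP (T i m).
have [SigOT _ SigOU _] := kfield_SigmaOmega.
split.
- move=> A SA; rewrite (T_star_fun_Dm i ts hw) //.
  exact/mu_ge0/preimage_to_Omega_measurable.
- by rewrite (T_star_fun_Dm i ts hw SigOT) preimage_setT.
- move=> A B SA SB AB0; rewrite !(T_star_fun_Dm i ts hw) //; last exact: SigOU.
  rewrite preimage_setU; apply: mu_add.
  + exact: preimage_to_Omega_measurable.
  + exact: preimage_to_Omega_measurable.
  + by rewrite -preimage_setI AB0 preimage_set0.
Qed.

Definition T_star (i : I) (w : W) : Delta W SigO := exist _ _ (fa_prob_T_star_fun i w).

Lemma T_star_fun_Dm_bracket (i : I) {w : W} {M : Type} {Sig : set (set M)}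
    {T : I -> M -> Delta M Sig} {th : M -> S} (ts : is_type_space K S I SigS M Sig T th)
    {m : M} {f : kexpr K S I} :
  sval w = Dm K S I SigS M Sig T th m -> wf f ->
  T_star_fun i w (br f) = sval (T i m) (sem K S I M Sig T th f).
Proof.
move=> hw wf_f.
by rewrite (T_star_fun_Dm i ts hw) ?(sem_preimage_bracket ts wf_f) //; exists f.
Qed.

Lemma T_star_bracket i w f : wf f ->
  sval (T_star i w) (br f) = sup [set p : R | 0 <= p <= 1 /\ sval w (Bel i p f)].
Proof.
move=> wf_f; have [M [Sig [T [th [m [ts hw]]]]]] := svalP w.
have v01 := type_ge0_le1 ts i m (sem_measurable ts wf_f).
rewrite /= (T_star_fun_Dm_bracket i ts hw wf_f) -[LHS](sup_itv01_le v01) hw.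
by congr sup; apply/seteqP; split=> p /=; rewrite Dm_BelE // => -[].
Qed.

Lemma T_star_measurable i B : Delta_kfield K W SigO B -> SigO (T_star i @^-1` B).
Proof.
apply: gen_kfield_preimage kfield_SigmaOmega _ B.
move=> _ [E [p [[f [wf_f ->]] [p01 ->]]]].
exists (Bel i p f); split=> //; apply/seteqP; split=> w;
  have [M [Sig [T [th [m [ts hw]]]]]] := svalP w;
  rewrite /preimage /= (T_star_fun_Dm_bracket i ts hw wf_f) /bracket /= hw;
  by rewrite Dm_BelE // => -[].
Qed.

Lemma T_star_introspection i w A : SigO A ->
  [set w' | forall E, SigO E -> sval (T_star i w') E = sval (T_star i w) E] `<=` A ->
  sval (T_star i w) A = 1.
Proof.
move=> SA sub; have [M [Sig [T [th [m [ts hw]]]]]] := svalP w.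
have [_ _ _ T_intro _] := ts.
rewrite /= (T_star_fun_Dm i ts hw SA).
apply: T_intro (preimage_to_Omega_measurable ts SA) _ => m' Tm'.
apply: sub => E SE /=.
rewrite (T_star_fun_Dm i ts hw SE) (T_star_fun_Dm i ts (to_OmegaE ts m') SE).
by apply: Tm'; exact: preimage_to_Omega_measurable.
Qed.

End CanonicalTypeSpace.

Definition point_mass {M : Type} (x : M) (A : set M) : R := (x \in A)%:R.

Lemma fa_prob_point_mass {M : Type} (Sig : set (set M)) (x : M) :
  fa_prob M Sig (point_mass x).
Proof.
split=> [E _||A B _ _ AB0]; rewrite /point_mass ?in_setT ?ler0n // in_setU.
have [xA|_] := boolP (x \in A); have [xB|_] := boolP (x \in B); rewrite ?addr0 ?add0r //.
suff : (A `&` B) x by rewrite AB0.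
by split; exact: set_mem.
Qed.

Lemma one_point_type_space (K S I : Type) (SigS : set (set S)) (s : S) :
  is_type_space K S I SigS unit setT
    (fun _ _ => exist _ _ (fa_prob_point_mass setT tt)) (fun _ => s).
Proof.
split=> // i m A _ sub.
by rewrite /point_mass /= mem_set //; apply: sub.
Qed.

Theorem proposition4 (K S I : Type) (SigS : set (set S)) :
  regular_infinite K ->
  (exists i : I, True) ->
  (exists s : S, True) ->
  kfield K S SigS ->
  separates_points S SigS ->
  exists (Tst : I -> OmegaT K S I SigS ->
                Delta (OmegaT K S I SigS) (SigmaOmega K S I SigS))
         (thst : OmegaT K S I SigS -> S),
    (forall (i : I) (w : OmegaT K S I SigS) (f : kexpr K S I), wff K S I SigS f ->
       sval (Tst i w) (bracket K S I SigS f)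
       = sup [set p : R | 0 <= p <= 1 /\ sval w (Bel i p f)]) /\
    (forall (w : OmegaT K S I SigS) (E : set S),
       SigS E -> sval w (@Atom K S I E) -> E (thst w)) /\
    is_type_space K S I SigS (OmegaT K S I SigS) (SigmaOmega K S I SigS) Tst thst.
Proof.
move=> [infK _] _ [s _] kS sep.
exists (T_star kS infK), theta_star.
split; [exact: T_star_bracket | split].
  by move=> w E SE /(theta_star_Atom sep SE).
split.
- by exists (to_Omega (one_point_type_space K S I SigS s) tt).
- exact: kfield_SigmaOmega.
- exact: T_star_measurable.
- exact: T_star_introspection.
- by move=> E SE; exists (Atom E); split=> //; rewrite bracket_Atom.
Qed.
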